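(* For every integer $n\ge 0$, \[ \sum_{j=0}^{n} \frac{q^{j}(q;q)_{n+j}}{(q^2;q^2)_j}=(q^2;q^2)_n . \]
   Context: $(a;q)_0:=1$ and $(a;q)_n:=(1-a)(1-aq)\cdots(1-aq^{n-1})$ for $n\ge1$. *)

From mathcomp Require Import all_boot all_order all_algebra.
Set Implicit Arguments. Unset Strict Implicit. Unset Printing Implicit Defensive.
Import GRing.Theory.
Local Open Scope ring_scope.

Definition qpoch (R : nzRingType) (a q : R) (n : nat) : R :=
  \prod_(i < n) (1 - a * q ^+ i).

From mathcomp Require Import all_boot all_order all_algebra.
From mathcomp Require Import ring.
Import GRing.Theory.
Local Open Scope ring_scope.

(** Writing [T n j] for the [j]-th summand, one has
    [T (n+1) j - (1 - q^(2n+2)) T n j = G (j+1) - G j] with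
    [G j = - q^(n+1) (q;q)_(n+j) (1 - q^(2j)) / (q^2;q^2)_j], so summing over
    [j <= n] telescopes; the boundary term [G (n+1)] cancels the new summand
    [T (n+1) (n+1)], leaving [S (n+1) = (1 - q^(2n+2)) S n]. *)

Lemma qpochS (R : nzRingType) (a q : R) n :
  qpoch a q n.+1 = qpoch a q n * (1 - a * q ^+ n).
Proof. by rewrite /qpoch big_ord_recr. Qed.

Lemma qpoch_qS (R : nzRingType) (q : R) n :
  qpoch q q n.+1 = qpoch q q n * (1 - q ^+ n.+1).
Proof. by rewrite qpochS -exprS. Qed.

Lemma qpoch_neq0_le (R : nzRingType) (a q : R) m n :
  (m <= n)%N -> qpoch a q n != 0 -> qpoch a q m != 0.
Proof.
move=> /subnK <-; elim: (n - m)%N => [|k IH] //.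
rewrite addSn qpochS => hk; apply: IH; move: hk.
by apply: contra => /eqP ->; rewrite mul0r.
Qed.

Section Telescoping.
Variables (F : fieldType) (q : F).

Let P j : F := qpoch (q ^+ 2) (q ^+ 2) j.
Let Q m : F := qpoch q q m.
Let T n j : F := q ^+ j * Q (n + j) / P j.
Let G n j : F := - q ^+ n.+1 * Q (n + j) * (1 - (q ^+ 2) ^+ j) / P j.

Lemma summand_recurrence n j : P j.+1 != 0 ->
  T n.+1 j - (1 - (q ^+ 2) ^+ n.+1) * T n j = G n j.+1 - G n j.
Proof.
rewrite /P qpoch_qS mulf_eq0 negb_or => /andP [hP hj].
rewrite /T /G /Q /P addSn addnS !qpoch_qS.
set p := qpoch _ _ j in hP *; set c := qpoch _ _ (n + j).
(* [field] only understands constant exponents: [q ^+ j] and [q ^+ n] become atoms. *)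
move: hj; rewrite -!exprM !mul2n -!addnn !addnS !addSn !exprS !exprD.
set a := q ^+ j; set b := q ^+ n => hj.
by field; rewrite hP hj.
Qed.

Lemma boundary_cancels n : G n n.+1 + T n.+1 n.+1 = 0.
Proof.
rewrite /G /T /Q addSn qpoch_qS -mulrDl -exprM.
have -> : (2 * n.+1 = (n + n.+1).+1)%N by rewrite mul2n -addnn addSn.
by rewrite mulrA !mulNr addNr mul0r.
Qed.

Lemma sum_summands_succ n : P n.+1 != 0 ->
  \sum_(j < n.+2) T n.+1 j = (1 - (q ^+ 2) ^+ n.+1) * \sum_(j < n.+1) T n j.
Proof.
move=> hn.
have telescoped : \sum_(j < n.+1) (T n.+1 j - (1 - (q ^+ 2) ^+ n.+1) * T n j)
    = G n n.+1 - G n 0.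
  rewrite -(telescope_sumr (fun j => G n j)) // big_mkord.
  apply: eq_bigr => j _; apply: summand_recurrence.
  exact: qpoch_neq0_le (ltn_ord j) hn.
have G0 : G n 0 = 0 by rewrite /G expr0 subrr mulr0 mul0r.
rewrite big_ord_recr /=.
move/eqP: telescoped; rewrite G0 subr0 sumrB -mulr_sumr subr_eq => /eqP ->.
by rewrite -addrA addrCA boundary_cancels addr0.
Qed.

End Telescoping.

Theorem lemma3p3 (F : fieldType) (q : F) (n : nat)
  (hq : qpoch (q ^+ 2) (q ^+ 2) n != 0) :
  \sum_(j < n.+1) q ^+ j * qpoch q q (n + j) / qpoch (q ^+ 2) (q ^+ 2) j
  = qpoch (q ^+ 2) (q ^+ 2) n.
Proof.
elim: n hq => [|n IH] hn.
  by rewrite big_ord1 /qpoch !big_ord0 expr0 mul1r divr1.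
rewrite sum_summands_succ // IH; last exact: qpoch_neq0_le (leqnSn n) hn.
by rewrite qpoch_qS mulrC.
Qed.
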